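(* Let $\Gamma$ be a telescopic numerical semigroup minimally generated by $r_0<r_1<\cdots<r_h$. If $h\ge 2$, then $r_h\ge 2^{h+1}-1$.
   Context: A numerical semigroup is a submonoid of $(\mathbb N,+)$ with finite complement in $\mathbb N$; it has a unique minimal generating system. $\langle X\rangle$ is the submonoid generated by $X$. For an arrangement $(r_0,\ldots,r_h)$ of the minimal generators, set $d_k=\gcd(r_0,\ldots,r_{k-1})$ for $k=1,\ldots,h+1$. Gluing: a set $A$ of positive integers with nontrivial partition $A=A_1\cup A_2$ is the gluing of $A_1$ and $A_2$ if $\mathrm{lcm}(\gcd A_1,\gcd A_2)\in\langle A_1\rangle\cap\langle A_2\rangle$. $\Gamma$ is free for the arrangement $(r_0,\ldots,r_h)$ if $h=0$, or $h\ge1$, $\{r_0,\ldots,r_h\}$ is the gluing of $\{r_0,\ldots,r_{h-1}\}$ and $\{r_h\}$, and $\langle r_0/d_h,\ldots,r_{h-1}/d_h\rangle$ is free for the arrangement $(r_0/d_h,\ldots,r_{h-1}/d_h)$. $\Gamma$ is telescopic if it is free for the arrangement of its minimal generators in increasing order $r_0<\cdots<r_h$. *)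

From mathcomp Require Import all_boot.
Set Implicit Arguments. Unset Strict Implicit. Unset Printing Implicit Defensive.

Definition in_monoid (A : seq nat) (n : nat) : Prop :=
  exists c : nat -> nat, n = \sum_(i < size A) c i * nth 0 A i.

Definition numerical_semigroup (G : nat -> Prop) : Prop :=
  [/\ G 0,
      (forall a b, G a -> G b -> G (a + b)) &
      exists N, forall n, N <= n -> G n].

Definition drop_at (i : nat) (r : seq nat) : seq nat := take i r ++ drop i.+1 r.

Definition minimal_generating_system (G : nat -> Prop) (r : seq nat) : Prop :=
  (forall n, G n <-> in_monoid r n) /\
  (forall i, i < size r -> ~ in_monoid (drop_at i r) (nth 0 r i)).

Definition gcd_seq (A : seq nat) : nat := foldr gcdn 0 A.

Definition gluing (A1 A2 : seq nat) : Prop :=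
  A1 != [::] /\ A2 != [::] /\ [seq x <- A1 | x \in A2] = [::] /\
  in_monoid A1 (lcmn (gcd_seq A1) (gcd_seq A2)) /\
  in_monoid A2 (lcmn (gcd_seq A1) (gcd_seq A2)).

(* free for the arrangement s = (r_0,...,r_h); the first argument is fuel
   (= size s), making the recursion on h structural.  Here
   take h s = (r_0,...,r_{h-1}), nth 0 s h = r_h, d_h = gcd_seq (take h s). *)
Fixpoint free_fuel (k : nat) (s : seq nat) : Prop :=
  match k with
  | 0 => True
  | k'.+1 =>
      let h := (size s).-1 in
      h = 0 \/
      (gluing (take h s) [:: nth 0 s h] /\
       free_fuel k' [seq x %/ gcd_seq (take h s) | x <- take h s])
  end.

Definition free_arrangement (s : seq nat) : Prop := free_fuel (size s) s.

Definition telescopic (G : nat -> Prop) (r : seq nat) : Prop :=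
  minimal_generating_system G r /\ sorted ltn r /\ free_arrangement r.

From mathcomp Require Import all_boot zify.

Set Implicit Arguments.
Unset Strict Implicit.
Unset Printing Implicit Defensive.

(* Write d_k for the gcd of the first k generators.  Freeness says that
   lcm(d_k, r_k) lies in <r_0, ..., r_{k-1}>, while minimality says that r_k
   does not; hence d_k does not divide r_k, so d_{k+1} is a proper divisor of
   d_k and d_k >= 2 d_{k+1}.  As d_{h+1} = 1, an induction using
   r_k > r_{k-1} and d_{k+1} | r_k gives r_k >= d_{k+1} (2^{k+1} - 1). *)

Lemma gcd_seq_dvd (l : seq nat) (x : nat) : x \in l -> gcd_seq l %| x.
Proof.
elim: l => [|y l IHl] //=; rewrite inE => /orP[/eqP-> | x_l].
  exact: dvdn_gcdl.
exact: dvdn_trans (dvdn_gcdr _ _) (IHl x_l).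
Qed.

Lemma gcd_seq_rcons (l : seq nat) (x : nat) :
  gcd_seq (rcons l x) = gcdn (gcd_seq l) x.
Proof. by elim: l => [|y l IHl] /=; rewrite ?gcdn0 ?gcd0n // IHl gcdnA. Qed.

Lemma gcd_seq_take_S (s : seq nat) (k : nat) : k < size s ->
  gcd_seq (take k.+1 s) = gcdn (gcd_seq (take k s)) (nth 0 s k).
Proof. by move=> k_lt; rewrite (take_nth 0 k_lt) gcd_seq_rcons. Qed.

Lemma gcd_seq_take_gt0 (s : seq nat) (k : nat) :
  0 < k -> 0 < nth 0 s 0 -> 0 < gcd_seq (take k s).
Proof.
move=> k_gt0 s0_gt0; have s_gt0 : 0 < size s by case: s s0_gt0.
have : gcd_seq (take k s) %| nth 0 s 0.
  apply: gcd_seq_dvd; rewrite -(nth_take 0 k_gt0) mem_nth //.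
  by rewrite size_take_min leq_min k_gt0.
by rewrite lt0n; apply: contraTneq => ->; rewrite dvd0n -lt0n.
Qed.

Lemma gcd_seq_map_divn (d : nat) (t : seq nat) : 0 < d -> all (dvdn d) t ->
  gcd_seq [seq x %/ d | x <- t] * d = gcd_seq t.
Proof.
move=> d_gt0; elim: t => [|x t IHt] //= /andP[d_x d_t].
by rewrite muln_gcdl divnK // IHt.
Qed.

Lemma in_monoid0 (A : seq nat) : in_monoid A 0.
Proof. by exists (fun=> 0); rewrite big1. Qed.

Lemma in_monoid_gcd_dvd (A : seq nat) (n : nat) :
  in_monoid A n -> gcd_seq A %| n.
Proof.
case=> c ->; apply: dvdn_sum => i _; apply/dvdn_mull/gcd_seq_dvd.
exact: mem_nth.
Qed.

Lemma in_monoid_cat (A B : seq nat) (n : nat) :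
  in_monoid A n -> in_monoid (A ++ B) n.
Proof.
case=> c ->; exists (fun i => if i < size A then c i else 0).
rewrite size_cat big_split_ord /= [X in _ = _ + X]big1 ?addn0.
  by apply: eq_bigr => i _; rewrite ltn_ord nth_cat ltn_ord.
by move=> i _; rewrite ltnNge leq_addr.
Qed.

Lemma in_monoid_map_divn (d : nat) (t : seq nat) (n : nat) :
  0 < d -> all (dvdn d) t ->
  in_monoid [seq x %/ d | x <- t] n -> in_monoid t (n * d).
Proof.
move=> d_gt0 /allP d_t [c ->]; exists c; rewrite big_distrl /= size_map.
apply: eq_bigr => i _; rewrite (nth_map 0) // -mulnA divnK //.
exact/d_t/mem_nth.
Qed.

Definition glued_prefixes (s : seq nat) : Prop :=
  forall k, 0 < k < size s ->
    in_monoid (take k s) (lcmn (gcd_seq (take k s)) (nth 0 s k)).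

Lemma glued_prefixes_map_divn (d : nat) (t : seq nat) :
  0 < d -> all (dvdn d) t ->
  glued_prefixes [seq x %/ d | x <- t] -> glued_prefixes t.
Proof.
move=> d_gt0 d_t glued k k_range; have /andP[_ k_lt] := k_range.
have d_tk : all (dvdn d) (take k t).
  by apply/allP => x /mem_take; apply: (allP d_t).
have := glued k; rewrite size_map -map_take (nth_map 0) // => /(_ k_range).
move/(in_monoid_map_divn d_gt0 d_tk).
by rewrite muln_lcml gcd_seq_map_divn // divnK // (allP d_t) ?mem_nth.
Qed.

Lemma free_fuel_glued_prefixes (n : nat) (s : seq nat) :
  size s = n -> 0 < nth 0 s 0 -> free_fuel n s -> glued_prefixes s.
Proof.
elim: n s => [|n IHn] s size_s s0_gt0; first by move=> _ k; rewrite size_s andbF.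
rewrite /= size_s /= => -[n0 | [glue free_init]].
  by move=> k; rewrite size_s n0; case: k.
set d := gcd_seq (take n s) in glue free_init.
have size_init : size (take n s) = n by rewrite size_takel // size_s.
have n_gt0 : 0 < n.
  by case: n {IHn size_s free_init size_init d} glue => // -[/negP]; rewrite take0.
have d_gt0 : 0 < d := gcd_seq_take_gt0 n_gt0 s0_gt0.
have d_init : all (dvdn d) (take n s) by apply/allP => x; apply: gcd_seq_dvd.
have glued_init : glued_prefixes (take n s).
  apply: (glued_prefixes_map_divn d_gt0 d_init (IHn _ _ _ free_init)).
    by rewrite size_map.
  have d_s0 : d %| nth 0 s 0.
    by rewrite -(nth_take 0 n_gt0) (allP d_init) ?mem_nth ?size_init.
  by rewrite (nth_map 0) ?size_init // nth_take // divn_gt0 // dvdn_leq.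
move=> k /andP[k_gt0]; rewrite size_s ltnS leq_eqVlt => /orP[/eqP-> | k_lt_n].
  by case: glue => _ [_ [_ [/=]]]; rewrite gcdn0.
have := glued_init k; rewrite size_init k_gt0 k_lt_n take_takel ?(ltnW k_lt_n) //.
by rewrite nth_take //; apply.
Qed.

Lemma free_arrangement_glued_prefixes (s : seq nat) :
  0 < nth 0 s 0 -> free_arrangement s -> glued_prefixes s.
Proof. exact: free_fuel_glued_prefixes. Qed.

Lemma glued_prefix_gcd_ndvd (s : seq nat) (k : nat) :
  glued_prefixes s -> 0 < k < size s -> ~ in_monoid (take k s) (nth 0 s k) ->
  ~~ (gcd_seq (take k s) %| nth 0 s k).
Proof.
move=> glued k_range notin; apply/negP => /lcmn_idPr lcm_eq.
by apply: notin; rewrite -lcm_eq; apply: glued.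
Qed.

Section MinimalGeneratingSystem.

Variables (G : nat -> Prop) (r : seq nat).
Hypothesis r_min : minimal_generating_system G r.

Lemma minimal_generating_system_notin_take (k : nat) :
  k < size r -> ~ in_monoid (take k r) (nth 0 r k).
Proof.
move=> k_lt in_take; have [_ r_indep] := r_min.
exact: (r_indep k k_lt (in_monoid_cat _ in_take)).
Qed.

Lemma minimal_generating_system_gt0 (k : nat) : k < size r -> 0 < nth 0 r k.
Proof.
move=> k_lt; have [_ r_indep] := r_min; rewrite lt0n; apply/eqP => r_k0.
apply: (r_indep k k_lt).
by rewrite r_k0; apply: in_monoid0.
Qed.

Lemma numerical_semigroup_gcd_seq : numerical_semigroup G -> gcd_seq r = 1.
Proof.
case=> _ _ [N G_large].
have gcd_dvd n : N <= n -> gcd_seq r %| n.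
  have [r_gen _] := r_min.
  by move=> N_le; apply/in_monoid_gcd_dvd/r_gen/G_large.
apply/eqP; rewrite -dvdn1 -(dvdn_addr 1 (gcd_dvd N (leqnn N))) addn1.
exact: gcd_dvd.
Qed.

End MinimalGeneratingSystem.

Section PrefixGcdBound.

Variable s : seq nat.
Hypotheses (s_sorted : sorted ltn s) (s0_gt0 : 0 < nth 0 s 0).
Hypothesis prefix_gcd_ndvd :
  forall k, 0 < k < size s -> ~~ (gcd_seq (take k s) %| nth 0 s k).

Lemma prefix_gcd_double (k : nat) : 0 < k < size s ->
  2 * gcd_seq (take k.+1 s) <= gcd_seq (take k s).
Proof.
move=> k_range; have /andP[k_gt0 k_lt] := k_range.
have [a d_eq] : exists a, gcd_seq (take k s) = a * gcd_seq (take k.+1 s).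
  by apply/dvdnP; rewrite gcd_seq_take_S // dvdn_gcdl.
have a_gt0 : 0 < a.
  by have := gcd_seq_take_gt0 k_gt0 s0_gt0; rewrite d_eq muln_gt0 => /andP[].
have a_ne1 : a != 1.
  apply: contraNneq (prefix_gcd_ndvd k_range) => a1.
  by rewrite d_eq a1 mul1n gcd_seq_take_S // dvdn_gcdr.
by rewrite d_eq leq_mul2r; case: a a_gt0 a_ne1 {d_eq} => [|[|a]]; rewrite ?orbT.
Qed.

Lemma prefix_gcd_bound (k : nat) : k < size s ->
  gcd_seq (take k.+1 s) * (2 ^ k.+1 - 1) <= nth 0 s k.
Proof.
elim: k => [s_gt0 | k IHk k_lt].
  by rewrite (take_nth 0 s_gt0) take0 /= gcdn0 muln1.
set d := gcd_seq (take k.+2 s).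
have d_gt0 : 0 < d := gcd_seq_take_gt0 (ltn0Sn _) s0_gt0.
have [b s_eq] : exists b, nth 0 s k.+1 = b * d.
  by apply/dvdnP; rewrite /d gcd_seq_take_S // dvdn_gcdr.
have s_incr : nth 0 s k < nth 0 s k.+1.
  by apply: (sorted_ltn_nth ltn_trans 0 s_sorted); rewrite ?inE ?(ltnW k_lt).
have d_double : 2 * d <= gcd_seq (take k.+1 s) by apply: prefix_gcd_double.
have : d * (2 * (2 ^ k.+1 - 1)) < d * b.
  rewrite [d * b]mulnC -s_eq; apply: leq_ltn_trans s_incr.
  apply: leq_trans (IHk (ltnW k_lt)).
  by rewrite mulnA leq_mul2r [d * 2]mulnC d_double orbT.
rewrite s_eq [b * d]mulnC leq_pmul2l // ltn_pmul2l // [2 ^ k.+2]expnS; lia.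
Qed.

End PrefixGcdBound.

Theorem proposition4p1 (G : nat -> Prop) (h : nat) (r : seq nat) :
  numerical_semigroup G ->
  size r = h.+1 ->
  minimal_generating_system G r ->
  sorted ltn r ->
  telescopic G r ->
  2 <= h ->
  2 ^ h.+1 - 1 <= nth 0 r h.
Proof.
move=> G_semigroup size_r r_min r_sorted [_ [_ r_free]] _.
have r0_gt0 : 0 < nth 0 r 0.
  by apply: (minimal_generating_system_gt0 r_min); rewrite size_r.
have r_glued := free_arrangement_glued_prefixes r0_gt0 r_free.
have r_ndvd k : 0 < k < size r -> ~~ (gcd_seq (take k r) %| nth 0 r k).
  move=> k_range; apply: (glued_prefix_gcd_ndvd r_glued k_range).
  by apply: (minimal_generating_system_notin_take r_min); case/andP: k_range.
have h_lt : h < size r by rewrite size_r.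
have := prefix_gcd_bound r_sorted r0_gt0 r_ndvd h_lt.
by rewrite -size_r take_size (numerical_semigroup_gcd_seq r_min G_semigroup) mul1n.
Qed.
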